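(* Let $n\ge 2$, $m\ge 1$ and consider a star junction in which pipes $P_1,\dots,P_n$ connect at a single node to pipes $P_{n+1},\dots,P_{n+m}$. Suppose real differentiable functions $p_{j,\ell},p_{j,r},q_{j,\ell},q_{j,r}$ ($j=1,\dots,n+m$) satisfy, for all $t$, \[ \dot p_{j,r}=c_j(q_{j,r}-q_{j,\ell}),\qquad \dot q_{j,\ell}=b_jp_{j,r}+d_jp_{j,\ell}+e_jq_{j,\ell}, \] and the junction constraints \[ p_{1,r}=\dots=p_{n,r}=p_{n+1,\ell}=\dots=p_{n+m,\ell},\qquad \sum_{k=1}^n q_{k,r}=\sum_{j=n+1}^{n+m}q_{j,\ell}. \] Then for every $k\in\{1,\dots,n\}$ and $j\in\{n+1,\dots,n+m\}$, for all $t$, \[ \left(\sum_{j'=1}^n\prod_{\substack{i=1\\ i\neq j'}}^n c_i\right)q_{k,r}=\prod_{\substack{i=1\\ i\neq k}}^n c_i\left(\sum_{i=n+1}^{n+m}q_{i,\ell}-\sum_{\substack{i=1\\ i\neq k}}^n q_{i,\ell}\right)+\left(\sum_{j'=1}^n\prod_{\substack{i=1\\ i\neq j'}}^n c_i-\prod_{\substack{i=1\\ i\neq k}}^n c_i\right)q_{k,\ell}, \qquad p_{j,\ell}=p_{1,r}. \]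
   Context: Linearized isothermal one-dimensional pipe flow model: $p$ pressure, $q$ mass flow, subscripts $\ell,r$ the left ($x=0$) and right ($x=L_j$) ends of pipe $P_j$. Coefficients: $c_j=-\frac{R_sT_0z_0}{A_jL_j}$, $b_j=-\frac{A_j}{L_j}$, $d_j=\frac{A_j}{L_j}+\frac{\lambda_j R_sT_0z_0}{2D_jA_j}\frac{q_{ss,j}|q_{ss,j}|}{p_{\ell,ss,j}^2}-\frac{A_jgh_j}{R_sT_0z_0L_j}$, $e_j=-\frac{\lambda_j R_sT_0z_0}{D_jA_j}\frac{|q_{ss,j}|}{p_{\ell,ss,j}}$, with positive constants $R_s,T_0,z_0$, gravity $g$, and per-pipe area $A_j>0$, length $L_j>0$, diameter $D_j>0$, friction factor $\lambda_j$, elevation difference $h_j$, nominal flow $q_{ss,j}>0$, nominal left pressure $p_{\ell,ss,j}>0$; hence all $c_j<0$. The variables $q_{i,\ell}$ ($i=1,\dots,n+m$) and $p_{1,r}$ are regarded as state variables; $q_{k,r}$ ($k\le n$) and $p_{j,\ell}$ ($j>n$) are internal variables. *)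

From HB Require Import structures.
From mathcomp Require Import all_boot all_order all_algebra.
From mathcomp Require Import all_classical all_reals all_analysis.
Set Implicit Arguments. Unset Strict Implicit. Unset Printing Implicit Defensive.
Import Order.TTheory GRing.Theory Num.Theory.
Local Open Scope ring_scope.

(* Coefficients of the linearized isothermal pipe model, pipe index j : nat
   (pipes are numbered 1..n+m).  Parameters:
   Rs T0 z0 g : physical constants; A L Dm lam h qss pss : per-pipe data
   (area, length, diameter, friction factor, elevation difference,
    nominal flow, nominal left pressure). *)
Definition c_coef (R : realType) (Rs T0 z0 : R) (A L : nat -> R) (j : nat) : R :=
  - (Rs * T0 * z0) / (A j * L j).

Definition b_coef (R : realType) (A L : nat -> R) (j : nat) : R :=
  - (A j / L j).

Definition d_coef (R : realType) (Rs T0 z0 g : R)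
  (A L Dm lam h qss pss : nat -> R) (j : nat) : R :=
  A j / L j
  + (lam j * Rs * T0 * z0) / (2 * Dm j * A j) * (qss j * `|qss j|) / (pss j ^+ 2)
  - (A j * g * h j) / (Rs * T0 * z0 * L j).

Definition e_coef (R : realType) (Rs T0 z0 : R)
  (A Dm lam qss pss : nat -> R) (j : nat) : R :=
  - ((lam j * Rs * T0 * z0) / (Dm j * A j) * `|qss j| / pss j).

From HB Require Import structures.
From mathcomp Require Import all_boot all_order all_algebra.
From mathcomp Require Import all_classical all_reals all_analysis.
From mathcomp Require Import ring.
Set Implicit Arguments. Unset Strict Implicit. Unset Printing Implicit Defensive.
Import Order.TTheory GRing.Theory Num.Theory.
Local Open Scope ring_scope.

(* The pressures p_{k,r}, k <= n, coincide, hence so do their derivatives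
   c_k (q_{k,r} - q_{k,l}).  Writing x_k := q_{k,r} - q_{k,l}, the equal
   products c_k x_k give (prod_{i<>j} c_i) x_k = (prod_{i<>k} c_i) x_j, and
   summing over j yields S x_k = P_k sum_j x_j.  Kirchhoff's law at the node
   replaces sum_j q_{j,r} by the total outflow, and the identity follows.
   No coefficient is ever inverted, so the sign and positivity hypotheses of
   the model are not needed. *)

Section ProductsExceptOne.

Variables (R : comPzRingType) (I : eqType) (r : seq I) (c : I -> R).
Hypothesis r_uniq : uniq r.

Lemma prod_neq_bigD1 j k : k \in r -> k != j ->
  \prod_(i <- r | i != j) c i = c k * \prod_(i <- r | (i != j) && (i != k)) c i.
Proof.
move=> kr kj; rewrite big_mkcond (bigD1_seq k) //= kj -big_mkcondr.
by under eq_bigl do rewrite andbC.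
Qed.

Lemma prod_neq_mul_swap (x : I -> R) j k : j \in r -> k \in r ->
  c j * x j = c k * x k ->
  (\prod_(i <- r | i != j) c i) * x k = (\prod_(i <- r | i != k) c i) * x j.
Proof.
move=> jr kr cx; have [->|kj] := eqVneq k j; first by [].
rewrite (prod_neq_bigD1 kr kj) (prod_neq_bigD1 jr); last by rewrite eq_sym.
rewrite [in RHS](eq_bigl (fun i => (i != j) && (i != k))) => [|i]; last by rewrite andbC.
by rewrite mulrAC [RHS]mulrAC cx.
Qed.

Lemma sum_prod_neq_mul (x : I -> R) k :
  {in r &, forall i j, c i * x i = c j * x j} -> k \in r ->
  (\sum_(j <- r) \prod_(i <- r | i != j) c i) * x k
    = (\prod_(i <- r | i != k) c i) * \sum_(j <- r) x j.
Proof.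
move=> cx kr; rewrite mulr_suml mulr_sumr.
by apply: eq_big_seq => j jr; apply: prod_neq_mul_swap => //; apply: cx.
Qed.

Lemma junction_flow_identity (q_in q_out : I -> R) (Q : R) k :
  {in r &, forall i j, c i * (q_in i - q_out i) = c j * (q_in j - q_out j)} ->
  \sum_(i <- r) q_in i = Q -> k \in r ->
  let S := \sum_(j <- r) \prod_(i <- r | i != j) c i in
  let Pk := \prod_(i <- r | i != k) c i in
  S * q_in k = Pk * (Q - \sum_(i <- r | i != k) q_out i) + (S - Pk) * q_out k.
Proof.
move=> cx <- kr S Pk.
have Sx : S * (q_in k - q_out k) = Pk * \sum_(i <- r) (q_in i - q_out i).
  exact: sum_prod_neq_mul.
rewrite sumrB [\sum_(i <- r) q_out i](bigD1_seq k) //= in Sx.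
have -> : S * q_in k = S * q_out k + S * (q_in k - q_out k) by ring.
rewrite Sx; ring.
Qed.

End ProductsExceptOne.

Theorem corollary3 (R : realType) (n m : nat) (hn : (2 <= n)%N) (hm : (1 <= m)%N)
  (Rs T0 z0 g : R) (A L Dm lam h qss pss : nat -> R)
  (hRs : 0 < Rs) (hT0 : 0 < T0) (hz0 : 0 < z0)
  (hA : forall j, (1 <= j <= n + m)%N -> 0 < A j)
  (hL : forall j, (1 <= j <= n + m)%N -> 0 < L j)
  (hD : forall j, (1 <= j <= n + m)%N -> 0 < Dm j)
  (hq : forall j, (1 <= j <= n + m)%N -> 0 < qss j)
  (hp : forall j, (1 <= j <= n + m)%N -> 0 < pss j)
  (p_l p_r q_l q_r : nat -> R -> R)
  (dpl : forall j (t : R), (1 <= j <= n + m)%N -> derivable (p_l j) t 1)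
  (dpr : forall j (t : R), (1 <= j <= n + m)%N -> derivable (p_r j) t 1)
  (dql : forall j (t : R), (1 <= j <= n + m)%N -> derivable (q_l j) t 1)
  (dqr : forall j (t : R), (1 <= j <= n + m)%N -> derivable (q_r j) t 1)
  (eq_pr : forall j (t : R), (1 <= j <= n + m)%N ->
     is_derive t 1 (p_r j) (c_coef Rs T0 z0 A L j * (q_r j t - q_l j t)))
  (eq_ql : forall j (t : R), (1 <= j <= n + m)%N ->
     is_derive t 1 (q_l j)
       (b_coef A L j * p_r j t + d_coef Rs T0 z0 g A L Dm lam h qss pss j * p_l j t
        + e_coef Rs T0 z0 A Dm lam qss pss j * q_l j t))
  (junc_r : forall k (t : R), (1 <= k <= n)%N -> p_r k t = p_r 1%N t)
  (junc_l : forall j (t : R), (n + 1 <= j <= n + m)%N -> p_l j t = p_r 1%N t)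
  (junc_q : forall t : R, \sum_(1 <= k < n.+1) q_r k t = \sum_(n.+1 <= j < (n + m).+1) q_l j t) :
  forall (k j : nat), (1 <= k <= n)%N -> (n + 1 <= j <= n + m)%N -> forall t : R,
    let c := c_coef Rs T0 z0 A L in
    let S := \sum_(1 <= j' < n.+1) \prod_(1 <= i < n.+1 | i != j') c i in
    let Pk := \prod_(1 <= i < n.+1 | i != k) c i in
    S * q_r k t =
      Pk * (\sum_(n.+1 <= i < (n + m).+1) q_l i t - \sum_(1 <= i < n.+1 | i != k) q_l i t)
      + (S - Pk) * q_l k t
    /\ p_l j t = p_r 1%N t.
Proof.
move=> k j hk hj t c S Pk; split; last exact: junc_l.
have inflow_pipe i : i \in index_iota 1 n.+1 -> (1 <= i <= n)%N.
  by rewrite mem_index_iota ltnS.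
have pipe_in_network i : (1 <= i <= n)%N -> (1 <= i <= n + m)%N.
  by case/andP=> -> /leq_trans; apply; rewrite leq_addr.
have inflow_pressure_slope i : i \in index_iota 1 n.+1 ->
    c i * (q_r i t - q_l i t) = 'D_1 (p_r 1%N) t.
  move=> /inflow_pipe hi.
  have -> : p_r 1%N = p_r i by apply: funext => s; rewrite junc_r.
  have pr_i_derive := eq_pr i t (pipe_in_network i hi).
  by rewrite derive_val.
have balanced : {in index_iota 1 n.+1 &, forall i i',
    c i * (q_r i t - q_l i t) = c i' * (q_r i' t - q_l i' t)}.
  by move=> i i' hi hi'; rewrite !inflow_pressure_slope.
have k_inflow : k \in index_iota 1 n.+1 by rewrite mem_index_iota ltnS.
have inflow_uniq : uniq (index_iota 1 n.+1) by exact: iota_uniq.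
exact: (junction_flow_identity (q_in := q_r ^~ t) (q_out := q_l ^~ t)
  inflow_uniq balanced (junc_q t) k_inflow).
Qed.
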